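(* Let $K\ge 3$, $d_2,\dots,d_K\ge 2$ and $d_1=d_2\cdots d_K-1$. Then there is a bijection between the set of SLOCC equivalence classes of SLOCC maximal states in $\mathbb{C}^{d_1}\otimes\mathbb{C}^{d_2}\otimes\cdots\otimes\mathbb{C}^{d_K}$ and the set of SLOCC equivalence classes of nonzero states in $\mathbb{C}^{d_2}\otimes\cdots\otimes\mathbb{C}^{d_K}$. Explicitly, a maximal state $|\Phi\rangle=\sum_{i=1}^{d_1}|i\rangle|\phi_i\rangle$ (with $\{|i\rangle\}$ a basis of $\mathbb{C}^{d_1}$) is sent to the class of a nonzero vector spanning the one-dimensional space $\mathrm{span}\{|\phi_i\rangle\}^\perp\subset\mathbb{C}^{d_2}\otimes\cdots\otimes\mathbb{C}^{d_K}$.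
   Context: For a multipartite space $\mathbb{C}^{e_1}\otimes\cdots\otimes\mathbb{C}^{e_m}$ with parties the tensor factors, $|\psi\rangle\le_{\mathrm{SLOCC}}|\phi\rangle$ means $(L_1\otimes\cdots\otimes L_m)|\phi\rangle=|\psi\rangle$ for some linear operators $L_i$ on $\mathbb{C}^{e_i}$; two states are SLOCC equivalent if each is $\le_{\mathrm{SLOCC}}$ the other (equivalently, related by $L_1\otimes\cdots\otimes L_m$ with all $L_i$ invertible). A state $|\phi\rangle$ is SLOCC maximal if for every $|\psi\rangle$ in the space, $|\phi\rangle\le_{\mathrm{SLOCC}}|\psi\rangle$ implies $|\psi\rangle\le_{\mathrm{SLOCC}}|\phi\rangle$; maximal states are exactly those whose reduced density operators on every single factor have full rank, so in particular the $|\phi_i\rangle$ above are linearly independent. *)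

From HB Require Import structures.
From mathcomp Require Import all_boot all_order all_algebra.
Set Implicit Arguments. Unset Strict Implicit. Unset Printing Implicit Defensive.
Import Order.TTheory GRing.Theory Num.Theory.
Local Open Scope ring_scope.

Notation mindex e := {dffun forall i, 'I_(e i)}.

Notation tensor C e := {ffun mindex e -> C}.

Definition local_op (C : numClosedFieldType) (m : nat) (e : 'I_m -> nat)
  (L : forall i : 'I_m, 'M[C]_(e i)) (phi : tensor C e) : tensor C e :=
  [ffun x : mindex e => \sum_(y : mindex e) (\prod_(i < m) L i (x i) (y i)) * phi y].

Definition slocc_le (C : numClosedFieldType) (m : nat) (e : 'I_m -> nat)
  (psi phi : tensor C e) : Prop :=
  exists L : forall i : 'I_m, 'M[C]_(e i), local_op L phi = psi.

Definition slocc_equiv (C : numClosedFieldType) (m : nat) (e : 'I_m -> nat)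
  (psi phi : tensor C e) : Prop :=
  slocc_le psi phi /\ slocc_le phi psi.

Definition slocc_maximal (C : numClosedFieldType) (m : nat) (e : 'I_m -> nat)
  (phi : tensor C e) : Prop :=
  forall psi : tensor C e, slocc_le phi psi -> slocc_le psi phi.

Definition rest_dims (k : nat) (d : 'I_k.+1 -> nat) : 'I_k -> nat :=
  fun j => d (lift ord0 j).

Definition rest_index (k : nat) (d : 'I_k.+1 -> nat) (x : mindex d)
  : mindex (rest_dims d) :=
  [ffun j : 'I_k => x (lift ord0 j)].

(* <phi_i | chi>, where Phi = sum_i |i> |phi_i>, i.e. phi_i(y) = Phi(i, y). *)
Definition slice_dot (C : numClosedFieldType) (k : nat) (d : 'I_k.+1 -> nat)
  (Phi : tensor C d) (i : 'I_(d ord0)) (chi : tensor C (rest_dims d)) : C :=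
  \sum_(x : mindex d | x ord0 == i) (Phi x)^* * chi (rest_index x).

Definition orth_slices (C : numClosedFieldType) (k : nat) (d : 'I_k.+1 -> nat)
  (Phi : tensor C d) (chi : tensor C (rest_dims d)) : Prop :=
  forall i : 'I_(d ord0), slice_dot Phi i chi = 0.

Definition spans_perp (C : numClosedFieldType) (k : nat) (d : 'I_k.+1 -> nat)
  (Phi : tensor C d) (psi : tensor C (rest_dims d)) : Prop :=
  [/\ psi != 0, orth_slices Phi psi &
      forall chi, orth_slices Phi chi -> exists a : C, chi = [ffun y => a * psi y]].

From HB Require Import structures.
From mathcomp Require Import all_boot all_order all_algebra.
Import Order.TTheory GRing.Theory Num.Theory.
Local Open Scope ring_scope.

Set Implicit Arguments. Unset Strict Implicit. Unset Printing Implicit Defensive.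

(* Write Phi = sum_i |i> |phi_i> and collect the phi_i as the rows of the
   d_1 x D "slice" matrix of Phi, where D = d_2 ... d_K = d_1 + 1.  A local
   operator L_1 (x) R acts on it by S |-> L_1 S (kron R)^T.  Then:
   - Phi is maximal iff its slice matrix has full rank d_1: a rank-deficient
     S is G T with rank T > rank S (rank_raise), and a reduction of a
     full-rank state has invertible factors, because a singular factor of a
     Kronecker product over K - 1 >= 2 parties costs at least two ranks;
   - for full rank, the vectors orthogonal to all phi_i form a line, and the
     adjoint of the factors of a reduction Phi <= Phi' maps the line of Phi
     onto that of Phi' (well-definedness and injectivity in one direction);
   - SLOCC equivalent states are related by invertible local operators (a
     rank argument on flattenings), which yields the converse direction;
   - every line is the orthogonal complement of some full-rank slice matrix
     (surjectivity). *)

Lemma prod_sum_dffun (R : comNzRingType) (I : finType) (T_ : I -> finType)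
  (f : forall i, T_ i -> R) :
  \prod_(i : I) \sum_(a : T_ i) f i a =
  \sum_(x : {dffun forall i, T_ i}) \prod_(i : I) f i (x i).
Proof.
pose P_ i := [ffun a : T_ i => f i a].
transitivity (\prod_(i : I) \sum_(a : T_ i) P_ i a).
  by apply: eq_bigr => i _; apply: eq_bigr => a _; rewrite ffunE.
under eq_bigr => i _ do rewrite (big_tag (fun i a => P_ i a) i).
rewrite bigA_distr_big_dep.
have := @big_fprod _ _ _ _ (GRing.Algebra_add__canonical__Monoid_AddLaw R) I T_ P_.
move=> /= <-; rewrite (reindex (@dffun_of_fprod I T_)); last first.
  exact/onW_bij/dffun_of_fprod_bij.
by apply: eq_bigr => t _; apply: eq_bigr => i _; rewrite !ffunE.
Qed.

Lemma rowV_nz_coord (F : fieldType) n (v : 'rV[F]_n) : v != 0 -> exists i, v 0 i != 0.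
Proof.
move=> v0; apply/existsP; apply: contraNT v0 => /existsPn v0.
by apply/eqP/rowP => i; rewrite mxE; apply/eqP/negPn/v0.
Qed.

Lemma singular_left_kernel (F : fieldType) n (A : 'M[F]_n) : A \notin unitmx ->
  exists2 u : 'rV_n, u != 0 & u *m A = 0.
Proof.
rewrite -row_free_unit -kermx_eq0 => /rowV0Pn [u uK u0].
by exists u => //; apply/sub_kermxP.
Qed.

(** Tensors as coordinate row vectors, local operators as Kronecker products. *)

Section Kronecker.
Variables (C : numClosedFieldType) (m : nat) (e : 'I_m -> nat).
Implicit Types (A B : forall t : 'I_m, 'M[C]_(e t)) (phi chi : tensor C e).
Local Notation D := #|mindex e|.

Definition vec chi : 'rV[C]_D := \row_b chi (enum_val b).
Definition unvec (v : 'rV[C]_D) : tensor C e := [ffun y => v 0 (enum_rank y)].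

Definition kron A : 'M[C]_D :=
  \matrix_(a, b) \prod_t A t ((enum_val a : mindex e) t) ((enum_val b : mindex e) t).

Lemma vecK : cancel vec unvec.
Proof. by move=> chi; apply/ffunP => y; rewrite !ffunE mxE enum_rankK. Qed.

Lemma unvecK : cancel unvec vec.
Proof. by move=> v; apply/rowP => b; rewrite !mxE ffunE enum_valK. Qed.

Lemma sum_mindex (F : mindex e -> C) :
  \sum_(y : mindex e) F y = \sum_(b < D) F (enum_val b).
Proof. by rewrite (reindex (@enum_val _ (mem predT))) //; exact/onW_bij/enum_val_bij. Qed.

Lemma vec_local_op A chi : vec (local_op A chi) = vec chi *m (kron A)^T.
Proof.
apply/rowP => a; rewrite !mxE ffunE sum_mindex; apply: eq_bigr => b _.
by rewrite !mxE mulrC.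
Qed.

Lemma eq_local_op A B phi : (forall t, A t = B t) -> local_op A phi = local_op B phi.
Proof.
move=> eAB; apply/ffunP => x; rewrite !ffunE; apply: eq_bigr => y _.
by congr (_ * _); apply: eq_bigr => t _; rewrite eAB.
Qed.

Lemma eq_kron A B : (forall t, A t = B t) -> kron A = kron B.
Proof. by move=> eAB; apply/matrixP => a b; rewrite !mxE; apply: eq_bigr => t _; rewrite eAB. Qed.

Lemma local_op_comp A B phi :
  local_op A (local_op B phi) = local_op (fun t => A t *m B t) phi.
Proof.
apply/ffunP => x; rewrite !ffunE.
under eq_bigr => y _ do rewrite ffunE big_distrr.
rewrite exchange_big /=; apply: eq_bigr => z _.
under eq_bigr => y _ do rewrite mulrA.
rewrite -big_distrl /=; congr (_ * _).
under [RHS]eq_bigr => t _ do rewrite mxE.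
by rewrite prod_sum_dffun; apply: eq_bigr => y _; rewrite -big_split.
Qed.

Lemma local_op1 phi : local_op (fun t => 1%:M) phi = phi.
Proof.
apply/ffunP => x; rewrite ffunE (bigD1 x) //= [X in _ * _ + X]big1.
  by rewrite addr0 big1 ?mul1r // => t _; rewrite mxE eqxx.
move=> y nyx; have [t nxyt] : exists t, x t != y t.
  apply/existsP; apply: contraNT nyx => /existsPn exy.
  by apply/eqP/ffunP => t; apply/esym/eqP/negPn/exy.
by rewrite (bigD1 t) //= mxE (negbTE nxyt) !mul0r.
Qed.

Lemma kron_mul A B : kron A *m kron B = kron (fun t => A t *m B t).
Proof.
apply: trmx_inj; rewrite trmx_mul; apply/row_matrixP => i.
rewrite !rowE -[delta_mx 0 i]unvecK mulmxA -!vec_local_op.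
by rewrite local_op_comp.
Qed.

Lemma kron1 : kron (fun t => 1%:M) = 1%:M.
Proof.
apply: trmx_inj; rewrite trmx1; apply/row_matrixP => i.
by rewrite !rowE -[delta_mx 0 i]unvecK -vec_local_op local_op1 mulmx1.
Qed.

Lemma kronV A : (forall t, A t \in unitmx) ->
  kron (fun t => invmx (A t)) *m kron A = 1%:M.
Proof. by move=> U; rewrite kron_mul -kron1; apply: eq_kron => t; rewrite mulVmx. Qed.

Lemma kron_unit A : (forall t, A t \in unitmx) -> kron A \in unitmx.
Proof. by move=> /kronV /mulmx1_unit []. Qed.

Definition adjmx (p : nat) (M : 'M[C]_p) : 'M[C]_p := map_mx Num.conj M^T.

Lemma kron_adj A : kron (fun t => adjmx (A t)) = adjmx (kron A).
Proof.
apply/matrixP => a b; rewrite !mxE rmorph_prod; apply: eq_bigr => t _.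
by rewrite !mxE.
Qed.

(* The column of conjugated coordinates of chi: the entries of S *m cvec chi
   are the conjugates of the inner products of the rows of S with chi. *)
Definition cvec chi : 'cV[C]_D := (map_mx Num.conj (vec chi))^T.

Lemma conj_mxK p q (M : 'M[C]_(p, q)) : map_mx Num.conj (map_mx Num.conj M) = M.
Proof. by apply/matrixP => i j; rewrite !mxE conjCK. Qed.

Lemma cvec_local_op A chi :
  cvec (local_op A chi) = map_mx Num.conj (kron A) *m cvec chi.
Proof.
rewrite /cvec vec_local_op map_mxM trmx_mul; apply/matrixP => i j; rewrite !mxE.
by apply: eq_bigr => b _; rewrite !mxE.
Qed.

Lemma cvec_local_adj A chi :
  cvec (local_op (fun t => adjmx (A t)) chi) = (kron A)^T *m cvec chi.
Proof. by rewrite cvec_local_op kron_adj /adjmx conj_mxK. Qed.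

Lemma cvec_eq0 chi : (cvec chi == 0) = (chi == 0).
Proof.
rewrite trmx_eq0 map_mx_eq0; apply/eqP/eqP => [E|->].
  by rewrite -[chi]vecK E; apply/ffunP => y; rewrite !ffunE mxE.
by apply/rowP => b; rewrite !mxE ffunE.
Qed.

Lemma cvec_scale a chi psi : cvec chi = a *: cvec psi ->
  chi = [ffun y => a^* * psi y].
Proof.
move=> E; apply/ffunP => y; rewrite ffunE.
have := congr1 (fun M : 'cV[C]_D => M (enum_rank y) 0) E.
by rewrite /cvec !mxE !enum_rankK => /(congr1 Num.conj); rewrite rmorphM /= !conjCK.
Qed.

Lemma slocc_le_scale (a : C) chi phi : (0 < m)%N -> slocc_le chi phi ->
  slocc_le [ffun y => a * chi y] phi.
Proof.
move=> m0 [L <-]; pose t0 := Ordinal m0.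
exists (fun t => if t == t0 then a *: L t else L t).
apply/ffunP => x; rewrite !ffunE big_distrr; apply: eq_bigr => y _.
rewrite /= mulrA; congr (_ * _); rewrite (bigD1 t0) //= [in RHS](bigD1 t0) //=.
rewrite mxE mulrA; congr (_ * _); apply: eq_bigr => t /negbTE -> //.
Qed.

End Kronecker.

(** A singular local factor makes the Kronecker product lose two ranks. *)

Lemma corank2_of_kernel (F : fieldType) n p (M : 'M[F]_(n, p)) (v w : 'rV_n) i j :
  v *m M = 0 -> w *m M = 0 -> v 0 i != 0 -> v 0 j = 0 -> w 0 j != 0 ->
  (\rank M + 2 <= n)%N.
Proof.
move=> vM wM vi vj wj.
have v0 : v != 0 by apply: contraNneq vi => ->; rewrite mxE.
have rv : \rank v = 1%N by rewrite rank_rV v0.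
have wv : ~~ (w <= v)%MS.
  apply: contra wj => /submxP [a ->].
  by rewrite [a]mx11_scalar mul_scalar_mx mxE vj mulr0.
have rvw : (2 <= \rank (v + w)%MS)%N.
  have := ltn_leqif (mxrank_leqif_eq (addsmxSl v w)); rewrite rv => ->.
  by apply: contra wv => /eqmxP ->; apply: addsmxSr.
have : ((v + w)%MS <= kermx M)%MS.
  by rewrite addsmx_sub; apply/andP; split; apply/sub_kermxP.
move/mxrankS; rewrite mxrank_ker => h.
by have := leq_trans rvw h; rewrite leq_subRL ?rank_leq_row.
Qed.

Section Update.
Variables (m : nat) (e : 'I_m -> nat).

Definition upd (z : mindex e) (j : 'I_m) (a : 'I_(e j)) : mindex e :=
  [ffun t => dfwith (fun t => z t) a t].
Arguments upd z j a : clear implicits.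

Lemma upd_in z j a : upd z j a j = a.
Proof. by rewrite ffunE dfwith_in. Qed.

Lemma upd_out z j a t : j != t -> upd z j a t = z t.
Proof. by move=> ne; rewrite ffunE dfwith_out. Qed.

Lemma upd_id z j : upd z j (z j) = z.
Proof. by apply/ffunP => t; rewrite ffunE; case: dfwithP. Qed.

Lemma upd_upd z j a b : upd (upd z j a) j b = upd z j b.
Proof.
apply/ffunP => t; rewrite !ffunE; case: dfwithP => [|t' ne]; first by rewrite dfwith_in.
by rewrite dfwith_out // ffunE dfwith_out.
Qed.

End Update.
Arguments upd {m e} z j a.

Section KronSingular.
Variables (C : numClosedFieldType) (m : nat) (e : 'I_m -> nat).
Local Notation D := #|mindex e|.

Definition prod_tensor (f : forall t, 'I_(e t) -> C) : tensor C e :=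
  [ffun x : mindex e => \prod_t f t (x t)].

Lemma prod_tensor_kron_ker (A : forall t, 'M[C]_(e t)) f t0 :
  (\row_a f t0 a) *m A t0 = 0 -> vec (prod_tensor f) *m kron A = 0.
Proof.
move=> ft0; apply/rowP => a; rewrite !mxE.
set z : mindex e := enum_val a.
under eq_bigr => b _ do rewrite !mxE -/z.
rewrite -(sum_mindex (fun y => prod_tensor f y * \prod_t A t (y t) (z t))).
under eq_bigr => y _ do rewrite ffunE -big_split /=.
rewrite -(prod_sum_dffun (fun t c => f t c * A t c (z t))) (bigD1 t0) //=.
have -> : \sum_c f t0 c * A t0 c (z t0) = ((\row_a f t0 a) *m A t0) 0 (z t0).
  by rewrite mxE; apply: eq_bigr => c _; rewrite mxE.
by rewrite ft0 mxE mul0r.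
Qed.

(* If some factor A t0 is singular and another party t1 has dimension >= 2,
   then kron A has corank at least 2: the product tensors with a kernel
   vector at t0 and two different basis vectors at t1 are independent. *)
Lemma kron_singular_rank (A : forall t, 'M[C]_(e t)) (t0 t1 : 'I_m)
  (p q : 'I_(e t1)) (c : mindex e) :
  t0 != t1 -> p != q -> A t0 \notin unitmx -> (\rank (kron A) + 2 <= D)%N.
Proof.
move=> nt01 npq /singular_left_kernel [u u0 uA].
have [r ur] := rowV_nz_coord u0.
pose f (b : 'I_(e t1)) : forall t, 'I_(e t) -> C :=
  dfwith (fun t (a : 'I_(e t)) => (a == upd c t1 b t)%:R) (fun a : 'I_(e t0) => u 0 a).
have f_t0 b : f b t0 = (fun a => u 0 a) by rewrite /f dfwith_in.
have f_out b t : t0 != t -> f b t = (fun a => (a == upd c t1 b t)%:R).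
  by move=> nt; rewrite /f dfwith_out.
pose x b := upd (upd c t1 b) t0 r.
have fx b b' : prod_tensor (f b) (x b') = if b == b' then u 0 r else 0.
  rewrite ffunE (bigD1 t0) //= f_t0 /x upd_in.
  case: eqP => [<-|/eqP nbb].
    rewrite big1 ?mulr1 // => t nt.
    by rewrite f_out 1?eq_sym // [upd (upd _ _ _) _ _ _]upd_out 1?eq_sym // eqxx.
  rewrite (bigD1 t1) 1?eq_sym //= f_out // upd_out // !upd_in eq_sym (negbTE nbb).
  by rewrite mul0r mulr0.
have ker b : vec (prod_tensor (f b)) *m kron A = 0.
  apply: (@prod_tensor_kron_ker _ _ t0); rewrite f_t0 -uA; congr (_ *m _).
  by apply/rowP => a; rewrite mxE.
have vx b y : vec (prod_tensor (f b)) 0 (enum_rank y) = prod_tensor (f b) y.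
  by rewrite mxE enum_rankK.
apply: (corank2_of_kernel (ker p) (ker q) (i := enum_rank (x p)) (j := enum_rank (x q)));
  by rewrite !vx !fx ?eqxx ?(negbTE npq).
Qed.

End KronSingular.

Lemma pid_completion (F : fieldType) p r (H : 'M[F]_p) :
  \rank (H *m (pid_mx r : 'M_p)) = r ->
  exists2 X : 'M[F]_p, X \in unitmx & X *m pid_mx r = H *m (pid_mx r : 'M_p).
Proof.
move=> rH; set Q : 'M[F]_p := pid_mx r in rH *; set H' := H *m Q in rH *.
have rp : (r <= p)%N by rewrite -rH; apply: rank_leq_col.
set P := col_ebase H'; set R := row_ebase H'.
have EH : H' = P *m Q *m R by rewrite /Q -rH mulmx_ebase.
have uP : P \in unitmx by apply: col_ebase_unit.
have uR : R \in unitmx by apply: row_ebase_unit.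
have QRQ : Q *m R *m Q = Q *m R.
  have : H' *m Q = H' by rewrite /H' -mulmxA /Q pid_mx_id.
  rewrite EH -!mulmxA => /(congr1 (mulmx (invmx P))).
  by rewrite !mulKmx // !mulmxA.
(* Y is Q R on the first r coordinates and the identity on the others. *)
pose Y := Q *m R + copid_mx r.
have uY : Y \in unitmx.
  suff /mulmx1_unit [] : Y *m (Q *m invmx R *m Q + copid_mx r) = 1%:M by [].
  have e1 : Q *m R *m (Q *m invmx R *m Q) = Q.
    by rewrite !mulmxA QRQ mulmxK // /Q pid_mx_id.
  have e2 : Q *m R *m copid_mx r = 0.
    by rewrite -QRQ -mulmxA /Q mul_pid_mx_copid // mulmx0.
  have e3 : copid_mx r *m (Q *m invmx R *m Q) = 0.
    by rewrite !mulmxA /Q mul_copid_mx_pid // !mul0mx.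
  rewrite mulmxDl (mulmxDr (Q *m R)) (mulmxDr (copid_mx r)) e1 e2 e3 copid_mx_id //.
  by rewrite addr0 add0r /copid_mx /Q addrC subrK.
exists (P *m Y); first by rewrite unitmx_mul uP uY.
by rewrite -mulmxA mulmxDl QRQ mul_copid_mx_pid // addr0 mulmxA -EH.
Qed.

Lemma rank_preserving_unit (F : fieldType) p q (M : 'M[F]_(p, q)) (L : 'M[F]_p) :
  \rank (L *m M) = \rank M -> exists2 U : 'M[F]_p, U \in unitmx & U *m M = L *m M.
Proof.
move=> rLM; set r := \rank M in rLM *.
have rp : (r <= p)%N by apply: rank_leq_row.
set P := col_ebase M; set R := row_ebase M.
have uP : P \in unitmx by apply: col_ebase_unit.
have EM : M = P *m pid_mx r *m R by rewrite mulmx_ebase.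
have Epid : (pid_mx r : 'M[F]_(p, q)) = (pid_mx r : 'M_p) *m pid_mx r.
  by rewrite pid_mx_id.
have rH : \rank (L *m P *m (pid_mx r : 'M_p)) = r.
  apply/eqP; rewrite eqn_leq; apply/andP; split.
    by apply: leq_trans (mxrankM_maxr _ _) _; rewrite rank_pid_mx.
  rewrite -[X in (X <= _)%N]rLM EM !mulmxA mxrankMfree ?row_free_unit ?row_ebase_unit //.
  by rewrite Epid mulmxA mxrankM_maxl.
have [X uX EX] := pid_completion rH.
exists (X *m invmx P); first by rewrite unitmx_mul uX unitmx_inv.
by rewrite EM !mulmxA mulmxKV // Epid !mulmxA EX.
Qed.

(** Flattenings: a tensor as a matrix whose rows are indexed by one party.
    A local operator acts on the j-th flattening by its j-th factor on the
    left and by some matrix on the right, so it cannot increase its rank. *)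

Section Flattening.
Variables (C : numClosedFieldType) (m : nat) (e : 'I_m -> nat) (j : 'I_m).
Implicit Types (A : forall t : 'I_m, 'M[C]_(e t)) (psi : tensor C e).
Local Notation D := #|mindex e|.

(* Column b lists the entries of psi along party j through the index enum_val b
   (columns are repeated, which keeps the definition uniform). *)
Definition flat psi : 'M[C]_(e j, D) := \matrix_(a, b) psi (upd (enum_val b) j a).

Definition at_party (M : 'M[C]_(e j)) : forall t, 'M[C]_(e t) :=
  @dfwith _ (fun t => 'M[C]_(e t)) (fun t => 1%:M) j M.

Definition set_party A (M : 'M[C]_(e j)) : forall t, 'M[C]_(e t) :=
  @dfwith _ (fun t => 'M[C]_(e t)) A j M.

Lemma flat_inj psi psi' : flat psi = flat psi' -> psi = psi'.
Proof.
move=> E; apply/ffunP => z.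
have := congr1 (fun M : 'M[C]_(e j, D) => M (z j) (enum_rank z)) E.
by rewrite /= !mxE enum_rankK upd_id.
Qed.

Lemma prod_at_party (F : forall t, 'I_(e t) -> C) (x : mindex e) :
  \prod_t F t (x t) = F j (x j) * \prod_(t | j != t) F t (x t).
Proof. by rewrite (bigD1 j) //=; congr (_ * _); apply: eq_bigl => t; rewrite eq_sym. Qed.

Lemma flat_at_party M psi : flat (local_op (at_party M) psi) = M *m flat psi.
Proof.
apply/matrixP => a bz; rewrite !mxE ffunE; set z : mindex e := enum_val bz.
transitivity (\sum_(y : mindex e | [forall t, (j != t) ==> (y t == z t)]) M a (y j) * psi y).
  rewrite [RHS]big_mkcond /=; apply: eq_bigr => y _.
  rewrite (prod_at_party (fun t a' => at_party M t a' (y t))) /at_party dfwith_in upd_in.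
  case: ifP => [/forallP yz|/negbT/forallPn [t]].
    rewrite big1 ?mulr1 // => t nt; rewrite dfwith_out // mxE upd_out //.
    by move: (yz t); rewrite nt /= eq_sym => ->.
  rewrite negb_imply => /andP [nt nyz].
  rewrite (bigD1 t) //= dfwith_out // mxE upd_out // eq_sym (negbTE nyz).
  by rewrite mul0r mulr0 mul0r.
rewrite (reindex_onto (fun c => upd z j c) (fun y : mindex e => y j)) /=; last first.
  move=> y /forallP yz; apply/ffunP => t; rewrite ffunE.
  have [<-|nt] := eqVneq j t; first by rewrite dfwith_in.
  by rewrite dfwith_out //; move: (yz t); rewrite nt /= => /eqP.
apply: eq_big => [c|c _]; last by rewrite upd_in mxE.
rewrite upd_in eqxx andbT; apply/forallP => t; apply/implyP => nt.
by rewrite upd_out.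
Qed.

Lemma flat_local_op_right A psi (c0 : 'I_(e j)) : A j = 1%:M ->
  exists W : 'M[C]_D, flat (local_op A psi) = flat psi *m W.
Proof.
move=> Aj.
exists (\matrix_(bw, bz) (((enum_val bw : mindex e) j == c0)%:R *
   \prod_(t | j != t) A t ((enum_val bz : mindex e) t) ((enum_val bw : mindex e) t))).
apply/matrixP => a bz; rewrite !mxE ffunE; set z : mindex e := enum_val bz.
transitivity (\sum_(y : mindex e | y j == a) (\prod_(t | j != t) A t (z t) (y t)) * psi y).
  rewrite [RHS]big_mkcond /=; apply: eq_bigr => y _.
  rewrite (prod_at_party (fun t a' => A t (upd z j a t) a')) Aj mxE upd_in eq_sym.
  case: eqP => _; last by rewrite mul0r mul0r.
  by rewrite mul1r; congr (_ * _); apply: eq_bigr => t nt; rewrite upd_out.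
rewrite (reindex_onto (fun w => upd w j a) (fun y => upd y j c0)) /=; last first.
  by move=> y /eqP <-; rewrite upd_upd upd_id.
transitivity (\sum_(w : mindex e) psi (upd w j a) * ((w j == c0)%:R *
   \prod_(t | j != t) A t (z t) (w t))); last first.
  by rewrite sum_mindex; apply: eq_bigr => b _; rewrite !mxE.
rewrite big_mkcond /=; apply: eq_bigr => w _; rewrite upd_in eqxx upd_upd /=.
have -> : (upd w j c0 == w) = (w j == c0).
  by apply/eqP/eqP => [<-|<-]; [rewrite upd_in | rewrite upd_id].
case: eqP => _; last by rewrite mul0r mulr0.
by rewrite mul1r mulrC; congr (_ * _); apply: eq_bigr => t nt; rewrite upd_out.
Qed.

Lemma local_op_split A psi :
  local_op A psi = local_op (set_party A 1%:M) (local_op (at_party (A j)) psi).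
Proof.
rewrite local_op_comp; apply: eq_local_op => t.
by have [<-|nt] := eqVneq j t; rewrite /set_party /at_party ?dfwith_in ?dfwith_out ?mulmx1 ?mul1mx.
Qed.

Lemma rank_flat_local_op A psi (c0 : 'I_(e j)) :
  (\rank (flat (local_op A psi)) <= \rank (A j *m flat psi))%N.
Proof.
have A1 : set_party A 1%:M j = 1%:M by rewrite /set_party dfwith_in.
rewrite local_op_split; have [W ->] := flat_local_op_right (local_op (at_party (A j)) psi) c0 A1.
by rewrite flat_at_party; apply: mxrankM_maxl.
Qed.

Lemma local_op_set_party A psi U : U *m flat psi = A j *m flat psi ->
  local_op A psi = local_op (set_party A U) psi.
Proof.
move=> E; rewrite local_op_split.
have -> : local_op (at_party (A j)) psi = local_op (at_party U) psi.
  by apply: flat_inj; rewrite !flat_at_party E.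
rewrite local_op_comp; apply: eq_local_op => t.
by have [<-|nt] := eqVneq j t; rewrite /set_party /at_party ?dfwith_in ?dfwith_out ?mulmx1 ?mul1mx.
Qed.

End Flattening.

(* SLOCC equivalent states are related by invertible local operators: party
   by party, the mutual reductions preserve the rank of each flattening, so
   each factor can be replaced by an invertible one (rank_preserving_unit). *)
Lemma slocc_equiv_invertible (C : numClosedFieldType) (m : nat) (e : 'I_m -> nat)
  (A B : forall t : 'I_m, 'M[C]_(e t)) (psi psi' : tensor C e) :
  (forall t, 0 < e t)%N -> psi = local_op A psi' -> psi' = local_op B psi ->
  exists2 A' : forall t : 'I_m, 'M[C]_(e t),
    forall t, A' t \in unitmx & psi = local_op A' psi'.
Proof.
move=> epos EA EB.
suff first_units n : (n <= m)%N -> exists2 A' : forall t : 'I_m, 'M[C]_(e t),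
    forall t : 'I_m, (t < n)%N -> A' t \in unitmx & psi = local_op A' psi'.
  by have [A' U E] := first_units m (leqnn m); exists A' => // t; apply: U.
elim: n => [_|n IH lenm]; first by exists A.
have [A' U E] := IH (ltnW lenm).
pose j := Ordinal lenm; pose c0 := Ordinal (epos j).
have r1 : (\rank (flat j psi) <= \rank (A' j *m flat j psi'))%N.
  by rewrite {1}E; apply: rank_flat_local_op c0.
have r2 : (\rank (flat j psi') <= \rank (flat j psi))%N.
  rewrite {1}EB; apply: leq_trans (rank_flat_local_op _ _ c0) _; exact: mxrankM_maxr.
have r3 : \rank (A' j *m flat j psi') = \rank (flat j psi').
  by apply/eqP; rewrite eqn_leq mxrankM_maxr (leq_trans r2 r1).
have [V uV EV] := rank_preserving_unit r3.
exists (set_party A' V); last by rewrite E; apply: local_op_set_party.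
move=> t; rewrite ltnS leq_eqVlt => /orP [/eqP tn|tn].
  have -> : t = j by apply: val_inj.
  by rewrite /set_party dfwith_in.
rewrite /set_party dfwith_out; first exact: U.
by apply: contraTneq tn => <-; rewrite /= ltnn.
Qed.

Lemma kernel_line (F : fieldType) n p (S : 'M[F]_(n, p)) (w u : 'cV_p) :
  (\rank S).+1 = p -> w != 0 -> S *m w = 0 -> S *m u = 0 -> exists a, u = a *: w.
Proof.
move=> rS w0 Sw Su; set K := kermx S^T.
have rK : \rank K = 1%N by rewrite mxrank_ker mxrank_tr -{1}rS subSnn.
have wK : (w^T <= K)%MS by apply/sub_kermxP; rewrite -trmx_mul Sw trmx0.
have uK : (u^T <= K)%MS by apply/sub_kermxP; rewrite -trmx_mul Su trmx0.
have rw : \rank w^T = 1%N by rewrite rank_rV trmx_eq0 w0.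
have := mxrank_leqif_eq wK; rewrite rw rK => -[_ /esym /eqmxP wKE].
have : (u^T <= w^T)%MS by rewrite wKE.
case/submxP => a uE; exists (a 0 0); apply: trmx_inj.
by rewrite uE [a]mx11_scalar mul_scalar_mx; apply/matrixP => i j; rewrite !mxE.
Qed.

(* A matrix S of non-maximal rank is a left multiple G *m T of a matrix T of
   strictly larger rank: add to S a row direction w outside its row space,
   along a direction u that a left-kernel vector c of S detects. *)
Lemma rank_raise (F : fieldType) n p (S : 'M[F]_(n, p)) :
  (\rank S < n)%N -> (\rank S < p)%N ->
  exists (G : 'M[F]_n) (T : 'M[F]_(n, p)), G *m T = S /\ (\rank S < \rank T)%N.
Proof.
move=> rSn rSp.
have /rowV0Pn [c /sub_kermxP cS c0] : kermx S != 0 by rewrite kermx_eq0 /row_free ltn_eqF.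
have /row_subPn [b wS] : ~~ (1%:M <= S)%MS by rewrite sub1mx /row_full ltn_eqF.
set w := row b 1%:M in wS.
have [i ci] := rowV_nz_coord c0.
pose u : 'cV[F]_n := (c 0 i)^-1 *: delta_mx i 0.
have cu : c *m u = 1%:M.
  rewrite /u -scalemxAr; apply/rowP => z; rewrite (ord1 z) !mxE.
  rewrite (bigD1 i) //= big1 ?addr0 => [|r nr]; last by rewrite !mxE (negbTE nr) mulr0.
  by rewrite !mxE !eqxx mulr1 mulVf.
pose G := 1%:M - u *m c; pose T := S + u *m w.
have GT : G *m T = S.
  rewrite mulmxBl mul1mx mulmxDr -!mulmxA cS mulmx0 (mulmxA c) cu mul1mx.
  by rewrite add0r addrK.
exists G, T; split => //.
have ST : (S <= T)%MS by rewrite -GT submxMl.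
have wT : (w <= T)%MS.
  have -> : w = c *m T by rewrite mulmxDr cS add0r mulmxA cu mul1mx.
  exact: submxMl.
rewrite (ltn_leqif (mxrank_leqif_eq ST)); apply: contra wS => /eqmxP ->.
exact: wT.
Qed.

Section DependentCons.
Variable (k : nat).

Definition dcons (P : 'I_k.+1 -> Type) (a : P ord0) (f : forall j : 'I_k, P (lift ord0 j))
  (t : 'I_k.+1) : P t :=
  match unliftP ord0 t with
  | UnliftSome j E => ecast t' (P t') (esym E) (f j)
  | UnliftNone E => ecast t' (P t') (esym E) a
  end.

Lemma dcons0 P a f : @dcons P a f ord0 = a.
Proof.
rewrite /dcons; case: unliftP => [j E|E]; last by rewrite (eq_axiomK (esym E)).
by exfalso; have := eq_liftF ord0 j; rewrite -E eqxx.
Qed.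

Lemma dconsS P a f j : @dcons P a f (lift ord0 j) = f j.
Proof.
rewrite /dcons; case: unliftP => [j' E|E]; last first.
  by exfalso; have := lift_eqF ord0 j; rewrite E eqxx.
have jj := lift_inj E; move: E; rewrite -jj => E.
by rewrite (eq_axiomK (esym E)).
Qed.

End DependentCons.

(** The slice matrix: row i of slices Phi is the vector phi_i of the
    decomposition Phi = sum_i |i> |phi_i>. *)

Section Slices.
Variables (C : numClosedFieldType) (k : nat) (d : 'I_k.+1 -> nat).
Local Notation e := (rest_dims d).
Local Notation D := #|mindex e|.
Local Notation N0 := (d ord0).

Definition mcons (i : 'I_N0) (y : mindex e) : mindex d :=
  [ffun t => @dcons k (fun t => 'I_(d t)) i (fun j => y j) t].

Lemma mcons0 i y : mcons i y ord0 = i.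
Proof. by rewrite ffunE dcons0. Qed.

Lemma mconsS i y j : mcons i y (lift ord0 j) = y j.
Proof. by rewrite ffunE dconsS. Qed.

Lemma rest_mcons i y : rest_index (mcons i y) = y.
Proof. by apply/ffunP => j; rewrite ffunE mconsS. Qed.

Lemma mcons_eta (x : mindex d) : mcons (x ord0) (rest_index x) = x.
Proof.
apply/ffunP => t; case: (unliftP ord0 t) => [j ->|->]; last exact: mcons0.
by rewrite mconsS ffunE.
Qed.

Lemma sum_mcons (F : mindex d -> C) :
  \sum_(x : mindex d) F x = \sum_(i : 'I_N0) \sum_(y : mindex e) F (mcons i y).
Proof.
rewrite pair_big /= (reindex (fun p : 'I_N0 * mindex e => mcons p.1 p.2)) //.
exists (fun x : mindex d => (x ord0, rest_index x)) => [[i y] _|x _] /=.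
  by rewrite mcons0 rest_mcons.
by rewrite mcons_eta.
Qed.

Definition slices (Phi : tensor C d) : 'M[C]_(N0, D) :=
  \matrix_(i, b) Phi (mcons i (enum_val b)).

Definition of_slices (T : 'M[C]_(N0, D)) : tensor C d :=
  [ffun x : mindex d => T (x ord0) (enum_rank (rest_index x))].

Lemma of_slicesK T : slices (of_slices T) = T.
Proof. by apply/matrixP => i b; rewrite !mxE ffunE mcons0 rest_mcons enum_valK. Qed.

Lemma slicesK Phi : of_slices (slices Phi) = Phi.
Proof. by apply/ffunP => x; rewrite ffunE mxE enum_rankK mcons_eta. Qed.

Lemma slices_inj : injective slices.
Proof. exact: can_inj slicesK. Qed.

Definition rest_ops (L : forall t, 'M[C]_(d t)) : forall j : 'I_k, 'M[C]_(e j) :=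
  fun j => L (lift ord0 j).

Definition ops_cons (M : 'M[C]_N0) (R : forall j : 'I_k, 'M[C]_(e j)) :
  forall t, 'M[C]_(d t) := @dcons k (fun t => 'M[C]_(d t)) M R.

Lemma slices_local_op L X :
  slices (local_op L X) = L ord0 *m slices X *m (kron (rest_ops L))^T.
Proof.
apply/matrixP => i b; rewrite !mxE ffunE sum_mcons; set y : mindex e := enum_val b.
under [RHS]eq_bigr => b' _ do rewrite !mxE big_distrl /=.
rewrite [RHS]exchange_big /=; apply: eq_bigr => i' _; rewrite sum_mindex.
apply: eq_bigr => b' _; rewrite big_ord_recl !mcons0 !mxE -/y.
rewrite -!mulrA; congr (_ * _); rewrite mulrC; congr (_ * _).
by apply: eq_bigr => j _; rewrite !mconsS.
Qed.

Lemma slices_ops_cons M R X :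
  slices (local_op (ops_cons M R) X) = M *m slices X *m (kron R)^T.
Proof.
rewrite slices_local_op /ops_cons dcons0; congr (_ *m _ *m _^T).
by apply: eq_kron => j; rewrite /rest_ops dconsS.
Qed.

Lemma orth_slicesE Phi chi : orth_slices Phi chi <-> slices Phi *m cvec chi = 0.
Proof.
have dotE i : slice_dot Phi i chi = ((slices Phi *m cvec chi) i 0)^*.
  rewrite /slice_dot mxE rmorph_sum /= big_mkcond sum_mcons.
  rewrite (bigD1 i) //= [X in _ + X]big1 ?addr0; last first.
    by move=> i' ni'; apply: big1 => y _; rewrite mcons0 (negbTE ni').
  rewrite sum_mindex; apply: eq_bigr => b _; rewrite mcons0 eqxx rest_mcons !mxE.
  by rewrite rmorphM /= conjCK.
split => [O|O i]; last by rewrite dotE O mxE conjC0.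
apply/matrixP => i j; rewrite (ord1 j) [RHS]mxE.
by have := O i; rewrite dotE => /eqP; rewrite conjC_eq0 => /eqP.
Qed.

End Slices.

Section Correspondence.
Variables (C : numClosedFieldType) (k : nat) (d : 'I_k.+1 -> nat).
Hypothesis k_ge2 : (3 <= k.+1)%N.
Hypothesis d_ge2 : forall j : 'I_k, (2 <= d (lift ord0 j))%N.
Hypothesis d0E : d ord0 = ((\prod_(j < k) d (lift ord0 j)) - 1)%N.
Local Notation e := (rest_dims d).
Local Notation D := #|mindex e|.
Local Notation N0 := (d ord0).

Lemma rest_dims_gt0 j : (0 < e j)%N.
Proof. exact: leq_trans (d_ge2 j). Qed.

Lemma card_rest : N0.+1 = D.
Proof.
have -> : D = (\prod_(j < k) d (lift ord0 j))%N.
  rewrite card_dep_ffun foldrE big_map big_enum /=.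
  by apply: eq_bigr => j _; rewrite card_ord.
by rewrite d0E subn1 prednK // prodn_gt0 // => j; apply: rest_dims_gt0.
Qed.

Lemma N0_lt_D : (N0 < D)%N.
Proof. by rewrite -card_rest. Qed.

(* A Kronecker product of rank at least D - 1 has invertible factors:
   otherwise kron_singular_rank applies, since at least two remaining
   parties exist and all have dimension >= 2. *)
Lemma kron_units_of_rank (R : forall j : 'I_k, 'M[C]_(e j)) :
  (N0 <= \rank (kron R))%N -> forall j, R j \in unitmx.
Proof.
move=> rk j0; apply/negPn/negP => nU.
have [j1 nj] : exists j1 : 'I_k, j0 != j1.
  have k1 : (1 < k)%N := k_ge2.
  have [j0_0|j0_n0] := eqVneq (val j0) 0%N.
    by exists (Ordinal k1); rewrite -val_eqE /= j0_0.
  by exists (Ordinal (ltnW k1)); rewrite -val_eqE.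
have npq : Ordinal (ltnW (d_ge2 j1)) != Ordinal (d_ge2 j1) by [].
have := kron_singular_rank [ffun j => Ordinal (rest_dims_gt0 j)] nj npq nU.
move=> lt_rk; have : (\rank (kron R) + 2 <= N0.+1)%N by rewrite card_rest.
by rewrite addn2 ltnS => /leq_trans/(_ rk); rewrite ltnn.
Qed.

Lemma full_rank_factors (L0 : 'M[C]_N0) (X : 'M[C]_(N0, D))
  (R : forall j : 'I_k, 'M[C]_(e j)) :
  \rank (L0 *m X *m (kron R)^T) = N0 -> L0 \in unitmx /\ (forall j, R j \in unitmx).
Proof.
move=> r; split.
  rewrite -row_free_unit /row_free eqn_leq rank_leq_row /= -{1}r.
  by apply: leq_trans (mxrankM_maxl _ _) _; apply: mxrankM_maxl.
by apply: kron_units_of_rank; rewrite -{1}r -(mxrank_tr (kron R)); apply: mxrankM_maxr.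
Qed.

Lemma rank_ker_cvec (psi : tensor C e) : psi != 0 -> \rank (kermx (cvec psi)) = N0.
Proof.
move=> psi0; have rpsi : \rank (cvec psi) = 1%N.
  by rewrite -mxrank_tr rank_rV trmx_eq0 cvec_eq0 psi0.
have D1 : (D - 1 = N0)%N by rewrite -card_rest subn1.
by rewrite mxrank_ker rpsi D1.
Qed.

Lemma maximal_full_rank (Phi : tensor C d) : slocc_maximal Phi -> \rank (slices Phi) = N0.
Proof.
move=> maxPhi; apply/eqP; rewrite eqn_leq rank_leq_row /= leqNgt; apply/negP => lt.
have ltD : (\rank (slices Phi) < D)%N by apply: leq_trans lt (ltnW N0_lt_D).
have [G [T [GT rT]]] := rank_raise lt ltD.
have le1 : slocc_le Phi (of_slices T).
  exists (ops_cons G (fun j => 1%:M)); apply: slices_inj.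
  by rewrite slices_ops_cons of_slicesK kron1 trmx1 mulmx1 GT.
have [L EL] := maxPhi _ le1.
move: rT; rewrite -[T]of_slicesK -EL slices_local_op ltnNge => /negP; apply.
by apply: leq_trans (mxrankM_maxl _ _) _; apply: mxrankM_maxr.
Qed.

Lemma full_rank_maximal (Phi : tensor C d) : \rank (slices Phi) = N0 -> slocc_maximal Phi.
Proof.
move=> r X [L EL].
have ES : slices Phi = L ord0 *m slices X *m (kron (rest_ops L))^T.
  by rewrite -EL slices_local_op.
have := r; rewrite ES => /full_rank_factors [u0 ur].
exists (ops_cons (invmx (L ord0)) (fun j => invmx (rest_ops L j))); apply: slices_inj.
rewrite slices_ops_cons ES !mulmxA mulVmx // mul1mx -mulmxA -trmx_mul kronV //.
by rewrite trmx1 mulmx1.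
Qed.

Lemma spans_perp_full_rank (Phi : tensor C d) psi : \rank (slices Phi) = N0 ->
  psi != 0 -> orth_slices Phi psi -> spans_perp Phi psi.
Proof.
move=> r psi0 O; split => //; move/orth_slicesE: O => O chi /orth_slicesE Ochi.
have r1 : (\rank (slices Phi)).+1 = D by rewrite r card_rest.
have cpsi0 : cvec psi != 0 by rewrite cvec_eq0.
have [a Ea] := kernel_line r1 cpsi0 O Ochi.
by exists a^*; apply: cvec_scale.
Qed.

Lemma exists_spans_perp (Phi : tensor C d) : \rank (slices Phi) = N0 ->
  exists psi, spans_perp Phi psi.
Proof.
move=> r; have : kermx (slices Phi)^T != 0.
  by rewrite kermx_eq0 /row_free mxrank_tr r ltn_eqF ?N0_lt_D.
case/rowV0Pn => w /sub_kermxP wS w0.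
pose psi := unvec (map_mx Num.conj w).
have cpsi : cvec psi = w^T by rewrite /cvec /psi unvecK conj_mxK.
exists psi; apply: spans_perp_full_rank => //; first by rewrite -cvec_eq0 cpsi trmx_eq0.
by apply/orth_slicesE; rewrite cpsi -[slices Phi]trmxK -trmx_mul wS trmx0.
Qed.

(* Reductions of maximal states reverse along the perpendicular vectors:
   if Phi = (L0 (x) R) Phi' then the adjoint R^* maps psi to a multiple of psi'. *)
Lemma slocc_le_perp (Phi Phi' : tensor C d) psi psi' : \rank (slices Phi) = N0 ->
  spans_perp Phi psi -> spans_perp Phi' psi' -> slocc_le Phi Phi' -> slocc_le psi' psi.
Proof.
move=> r [psi0 Opsi _] [_ _ perp'] [L EL].
set R := rest_ops L.
have ES : slices Phi = L ord0 *m slices Phi' *m (kron R)^T by rewrite -EL slices_local_op.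
have := r; rewrite ES => /full_rank_factors [u0 uR].
have ukT : (kron R)^T \in unitmx by rewrite unitmx_tr kron_unit.
pose chi := local_op (fun j => adjmx (R j)) psi.
have cchi : cvec chi = (kron R)^T *m cvec psi by rewrite cvec_local_adj.
have [a Ea] : exists a : C, chi = [ffun y => a * psi' y].
  apply: perp'; apply/orth_slicesE; move/orth_slicesE: Opsi.
  rewrite ES cchi -!mulmxA => /(congr1 (mulmx (invmx (L ord0)))).
  by rewrite mulKmx // mulmx0 mulmxA.
have a0 : a != 0.
  apply: contraNneq psi0 => a0.
  have : cvec chi = 0.
    by apply/eqP; rewrite cvec_eq0 Ea; apply/eqP/ffunP => y; rewrite !ffunE a0 mul0r.
  rewrite cchi => /(congr1 (mulmx (invmx (kron R)^T))).
  by rewrite mulKmx // mulmx0 => /eqP; rewrite cvec_eq0.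
have -> : psi' = [ffun y => a^-1 * chi y].
  by apply/ffunP => y; rewrite Ea !ffunE mulrA mulVf // mul1r.
apply: slocc_le_scale; first by rewrite -ltnS; apply: leq_trans k_ge2.
by exists (fun j => adjmx (R j)).
Qed.

(* Conversely, if psi and psi' are SLOCC equivalent, then they are related
   by invertible operators A', and (1 (x) A'^* ) Phi has the same rank and
   kernel condition as Phi', so the two slice matrices differ by G on the left. *)
Lemma perp_equiv_le (Phi Phi' : tensor C d) psi psi' :
  \rank (slices Phi) = N0 -> \rank (slices Phi') = N0 ->
  spans_perp Phi psi -> spans_perp Phi' psi' -> slocc_equiv psi psi' -> slocc_le Phi' Phi.
Proof.
move=> r r' [_ Opsi _] [psi'0 Opsi' _] [[A EA] [B EB]].
have [A' uA' EA'] := slocc_equiv_invertible rest_dims_gt0 (esym EA) (esym EB).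
pose adjA := fun j => adjmx (A' j).
have adjAT : (kron adjA)^T = map_mx Num.conj (kron A').
  by rewrite kron_adj /adjmx map_trmx trmxK.
have uA : map_mx Num.conj (kron A') \in unitmx by rewrite map_unitmx kron_unit.
set S1 := slices Phi *m map_mx Num.conj (kron A').
have r1 : \rank S1 = N0 by rewrite mxrankMfree ?row_free_unit.
have S1K : (S1 <= kermx (cvec psi'))%MS.
  by apply/sub_kermxP; rewrite -mulmxA -cvec_local_op -EA'; apply/orth_slicesE.
have S'K : (slices Phi' <= kermx (cvec psi'))%MS by apply/sub_kermxP/orth_slicesE.
have /eqmxP E' : (slices Phi' == kermx (cvec psi'))%MS.
  by have := mxrank_leqif_eq S'K; rewrite r' rank_ker_cvec // => -[_ <-].
have /submxP [G EG] : (S1 <= slices Phi')%MS by rewrite E'.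
have uG : G \in unitmx.
  rewrite -row_free_unit /row_free eqn_leq rank_leq_row /= -{1}r1 EG.
  exact: mxrankM_maxl.
exists (ops_cons (invmx G) adjA); apply: slices_inj.
by rewrite slices_ops_cons adjAT -mulmxA -/S1 EG mulKmx.
Qed.

Lemma exists_full_rank_orth (psi : tensor C e) : psi != 0 ->
  exists Phi : tensor C d, \rank (slices Phi) = N0 /\ orth_slices Phi psi.
Proof.
move=> psi0; set K := kermx (cvec psi); have rK := rank_ker_cvec psi0.
have N0D : (N0 <= D)%N by apply: ltnW N0_lt_D.
pose T := (pid_mx N0 : 'M[C]_(N0, D)) *m row_ebase K.
have TK : (T <= K)%MS.
  have EK : K = col_ebase K *m pid_mx N0 *m row_ebase K by rewrite -rK mulmx_ebase.
  have -> : T = (pid_mx N0 : 'M[C]_(N0, D)) *m invmx (col_ebase K) *m K.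
    rewrite {2}EK -!mulmxA mulKmx ?col_ebase_unit //.
    by rewrite /T !mulmxA mul_pid_mx minnn (minn_idPr N0D).
  exact: submxMl.
exists (of_slices T); rewrite of_slicesK; split.
  by rewrite mxrankMfree ?row_free_unit ?row_ebase_unit // rank_pid_mx.
by apply/orth_slicesE; rewrite of_slicesK; apply/sub_kermxP.
Qed.

End Correspondence.

(* K = k.+1 parties; party 0 has dimension d_1 = d_2 ... d_K - 1. *)
Theorem mainTheorem10 (C : numClosedFieldType) (k : nat) (d : 'I_k.+1 -> nat) :
  (3 <= k.+1)%N ->
  (forall j : 'I_k, 2 <= d (lift ord0 j))%N ->
  d ord0 = ((\prod_(j < k) d (lift ord0 j)) - 1)%N ->
  [/\ (* the map Phi |-> [psi] is defined on maximal states *)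
      forall Phi : tensor C d, slocc_maximal Phi ->
        exists psi : tensor C (rest_dims d), spans_perp Phi psi,
      (* it is well defined on classes and injective on classes *)
      forall (Phi Phi' : tensor C d) (psi psi' : tensor C (rest_dims d)),
        slocc_maximal Phi -> slocc_maximal Phi' ->
        spans_perp Phi psi -> spans_perp Phi' psi' ->
        (slocc_equiv Phi Phi' <-> slocc_equiv psi psi') &
      (* it is surjective onto classes of nonzero states *)
      forall psi : tensor C (rest_dims d), psi != 0 ->
        exists (Phi : tensor C d) (psi' : tensor C (rest_dims d)),
          [/\ slocc_maximal Phi, spans_perp Phi psi' & slocc_equiv psi' psi]].
Proof.
move=> k_ge2 d_ge2 d0E.
have full_rank := @maximal_full_rank C k d d_ge2 d0E.
split.
- by move=> Phi /full_rank; apply: exists_spans_perp.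
- move=> Phi Phi' psi psi' maxPhi maxPhi' perp perp'; split.
    case=> le le'; split.
      exact: (slocc_le_perp k_ge2 d_ge2 d0E (full_rank _ maxPhi') perp' perp le').
    exact: (slocc_le_perp k_ge2 d_ge2 d0E (full_rank _ maxPhi) perp perp' le).
  move=> equiv_psi; have le' : slocc_le Phi' Phi.
    exact: (perp_equiv_le d_ge2 d0E (full_rank _ maxPhi) (full_rank _ maxPhi')
              perp perp' equiv_psi).
  (* the maximality of Phi' reverses the reduction *)
  by split; first apply: maxPhi'.
- move=> psi psi0; have [Phi [r orth]] := exists_full_rank_orth d_ge2 d0E psi0.
  exists Phi, psi; split.
  + exact: (full_rank_maximal k_ge2 d_ge2 d0E r).
  + exact: (spans_perp_full_rank d_ge2 d0E r psi0 orth).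
  + by split; exists (fun j => 1%:M); rewrite local_op1.
Qed.
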